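(* Let $X$ be a finite or countably infinite set, let $q$ be a probability distribution on $X$, and let $\mathcal{S}=\langle x_1,\dots,x_n\rangle\in X^n$ be a sample. Let $a\ge 0$ and suppose $f:X\to[0,1]$ has training advantage $\hat\alpha(f)\ge a$. Define the probability distribution $q'(x)=q(x)e^{-af(x)}/Z_{q'}$ where $Z_{q'}=\sum_{x\in X}q(x)e^{-af(x)}$. Then $$\hat{L}(q';\mathcal{S})\le\hat{L}(q;\mathcal{S})-a^2/2.$$
   Context: The log-loss of a distribution $q$ on the sample is $\hat{L}(q;\mathcal{S})=-\frac{1}{n}\sum_{i=1}^n\log q(x_i)$. The empirical expectation is $\hat{\mathrm{E}}_{\mathcal{S}}[h(x)]=\frac1n\sum_{i=1}^n h(x_i)$. The training advantage of $f:X\to[0,1]$ (relative to $q$ and $\mathcal{S}$) is $\hat\alpha(f)=\mathrm{E}_{x\sim q}[f(x)]-\hat{\mathrm{E}}_{\mathcal{S}}[f(x)]$. *)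

From mathcomp Require Import all_boot all_order all_algebra.
From mathcomp Require Import all_classical all_reals all_analysis.
Set Implicit Arguments. Unset Strict Implicit. Unset Printing Implicit Defensive.
Import Order.TTheory GRing.Theory Num.Theory.
Local Open Scope classical_set_scope.
Local Open Scope ring_scope.

(* X is a countType (finite or countably infinite). Sums over X are the
   (unordered, nonnegative) extended-real sums \esum over [set: X]. *)

Definition is_distr (R : realType) (X : countType) (q : X -> R) : Prop :=
  (forall x, 0 <= q x) /\ (\esum_(x in [set: X]) (q x)%:E = 1%E).

Definition expect (R : realType) (X : countType) (q : X -> R) (h : X -> R) : R :=
  fine (\esum_(x in [set: X]) (q x * h x)%:E).

Definition emp_expect (R : realType) (X : Type) (n : nat) (S : 'I_n -> X)
  (h : X -> R) : R := n%:R^-1 * \sum_(i < n) h (S i).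

Definition neglogE (R : realType) (p : R) : \bar R :=
  if 0 < p then (- ln p)%:E else +oo%E.

Definition log_loss (R : realType) (X : Type) (q : X -> R) (n : nat)
  (S : 'I_n -> X) : \bar R :=
  ((n%:R^-1)%:E * \sum_(i < n) neglogE (q (S i)))%E.

Definition train_adv (R : realType) (X : countType) (q : X -> R) (n : nat)
  (S : 'I_n -> X) (f : X -> R) : R :=
  expect q f - emp_expect S f.

Definition Zq (R : realType) (X : countType) (q : X -> R) (a : R) (f : X -> R) : R :=
  fine (\esum_(x in [set: X]) (q x * expR (- (a * f x)))%:E).

Definition tilt (R : realType) (X : countType) (q : X -> R) (a : R) (f : X -> R)
  : X -> R := fun x => q x * expR (- (a * f x)) / Zq q a f.

(* Tilting q by e^(-a f) adds a f(x_i) + ln Z to the loss of every sample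
   point, so the loss changes by a * Ê_S[f] + ln Z.  Convexity of
   t |-> e^(-a t) on [0, 1] gives Z <= 1 - (1 - e^(-a)) E_q[f], hence
   ln Z <= Z - 1 <= -(1 - e^(-a)) E_q[f]; with Ê_S[f] <= E_q[f] - a the change
   is at most E_q[f] (a - 1 + e^(-a)) - a^2, and E_q[f] <= 1 together with
   e^(-a) <= 1 - a + a^2/2 bounds this by -a^2/2. *)

From mathcomp Require Import all_boot all_order all_algebra.
From mathcomp Require Import all_classical all_reals all_analysis.
From mathcomp Require Import ring lra.
Import Order.TTheory GRing.Theory Num.Theory.
Local Open Scope classical_set_scope.
Local Open Scope ring_scope.

Section exponential_bounds.
Context {R : realType}.
Implicit Types a x t : R.

Lemma expR_ge1DxDhalfsqr x : 0 <= x -> 1 + x + x ^+ 2 / 2 <= expR x.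
Proof.
move=> x0; have series3 : series (exp_coeff x) 3 = 1 + x + x ^+ 2 / 2.
  by rewrite /series /= !big_nat_recr //= big_geq // /exp_coeff /= add0r
    expr0 expr1 !divr1.
rewrite -series3; apply: nondecreasing_cvgn_le; last exact: is_cvg_series_exp_coeff.
by apply: nondecreasing_series => n _ _; rewrite divr_ge0 ?exprn_ge0.
Qed.

Lemma expRN_le1BxDhalfsqr a : 0 <= a -> expR (- a) <= 1 - a + a ^+ 2 / 2.
Proof.
move=> a0; have := expR_ge1DxDhalfsqr a a0; have := expR_gt0 (- a).
have := expRxMexpNx_1 a; rewrite expr2; nra.
Qed.

Lemma expRNM_le_chord a t : 0 <= t <= 1 ->
  expR (- (a * t)) <= 1 - (1 - expR (- a)) * t.
Proof.
case/andP=> t0 t1; have := @convex_expR R (Itv01 t0 t1) (- a) 0.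
by rewrite !convRE /= expR0 mulr0 addr0 mulrN mulrC /unstable.onem; lra.
Qed.

End exponential_bounds.

Lemma esumZl (R : realType) (T : choiceType) (I : set T) (a : T -> \bar R) (c : R) :
  0 <= c -> (forall i, (0 <= a i)%E) ->
  (\esum_(i in I) (c%:E * a i) = c%:E * \esum_(i in I) a i)%E.
Proof.
move=> c0 a0; rewrite /esum -ereal_supZl //; last first.
  by apply/set0P; exists (\sum_(x \in set0) a x)%E; exists set0 => //; exact: fsets_set0.
congr ereal_sup; apply/seteqP; split => x [A hA <-].
  by exists (\sum_(x \in A) a x)%E; [exists A|rewrite ge0_mule_fsumr].
by move: hA => [B hB <-]; exists B => //; rewrite ge0_mule_fsumr.
Qed.

Section expectation.
Context {R : realType} {X : countType} {q : X -> R}.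
Hypothesis q_distr : is_distr q.
Implicit Types (g h : X -> R) (c : R).

Let q_ge0 x : 0 <= q x. Proof. by case: q_distr. Qed.

Lemma esum_distr_le1 h : (forall x, 0 <= h x <= 1) ->
  (\esum_(x in [set: X]) (q x * h x)%:E <= 1)%E.
Proof.
move=> h01; case: q_distr => _ <-; apply: le_esum => x _.
by rewrite lee_fin ler_piMr //; case/andP: (h01 x).
Qed.

Lemma esum_distr_fin_num h : (forall x, 0 <= h x <= 1) ->
  \esum_(x in [set: X]) (q x * h x)%:E \is a fin_num.
Proof.
move=> h01; rewrite ge0_fin_numE.
  by rewrite (le_lt_trans (esum_distr_le1 _ h01)) // ltry.
by apply: esum_ge0 => x _; rewrite lee_fin mulr_ge0 //; case/andP: (h01 x).
Qed.

Lemma expectE h : (forall x, 0 <= h x <= 1) ->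
  (expect q h)%:E = (\esum_(x in [set: X]) (q x * h x)%:E)%E.
Proof. by move=> h01; apply/fineK/esum_distr_fin_num. Qed.

Lemma expect_ge0 h : (forall x, 0 <= h x) -> 0 <= expect q h.
Proof. by move=> h0; apply: fine_ge0; apply: esum_ge0 => x _; rewrite lee_fin mulr_ge0. Qed.

Lemma expect_le1 h : (forall x, 0 <= h x <= 1) -> expect q h <= 1.
Proof. by move=> h01; rewrite -lee_fin expectE // esum_distr_le1. Qed.

Lemma expect_cst c : 0 <= c -> expect q (fun=> c) = c.
Proof.
move=> c0; rewrite /expect (eq_esum (b := fun x => c%:E * (q x)%:E)%E); last first.
  by move=> x _; rewrite mulrC EFinM.
by rewrite esumZl //; case: q_distr => _ ->; rewrite mule1.
Qed.

Lemma le_expect g h : (forall x, 0 <= g x <= h x) -> (forall x, h x <= 1) ->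
  expect q g <= expect q h.
Proof.
move=> gh h1; have h01 x : 0 <= h x <= 1.
  by case/andP: (gh x) => /le_trans gh' /gh' ->; rewrite h1.
have g01 x : 0 <= g x <= 1 by case/andP: (gh x) => -> /le_trans ->.
rewrite -lee_fin !expectE //; apply: le_esum => x _.
by rewrite lee_fin ler_wpM2l //; case/andP: (gh x).
Qed.

Lemma expectD g h : (forall x, 0 <= g x <= 1) -> (forall x, 0 <= h x <= 1) ->
  expect q (g \+ h) = expect q g + expect q h.
Proof.
move=> g01 h01; rewrite /expect -fineD ?esum_distr_fin_num // -esumD; last 2 first.
- by move=> x _; rewrite lee_fin mulr_ge0 //; case/andP: (g01 x).
- by move=> x _; rewrite lee_fin mulr_ge0 //; case/andP: (h01 x).
by congr fine; apply: eq_esum => x _; rewrite /= mulrDr EFinD.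
Qed.

Lemma expectZ b h : 0 <= b -> (forall x, 0 <= h x <= 1) ->
  expect q (fun x => b * h x) = b * expect q h.
Proof.
move=> b0 h01; rewrite /expect (eq_esum (b := fun x => b%:E * (q x * h x)%:E)%E).
  rewrite esumZl ?fineM ?esum_distr_fin_num // => x.
  by rewrite lee_fin mulr_ge0 //; case/andP: (h01 x).
by move=> x _; rewrite mulrCA EFinM.
Qed.

Context {a : R} {f : X -> R}.
Hypotheses (a_ge0 : 0 <= a) (f01 : forall x, 0 <= f x <= 1).

Lemma expRN_le_Zq : expR (- a) <= Zq q a f.
Proof.
rewrite -[leLHS](expect_cst _ (expR_ge0 _)); apply: le_expect => x.
  by rewrite expR_ge0 ler_expR lerN2 ler_piMr //; case/andP: (f01 x).
by rewrite expR_le1 oppr_le0 mulr_ge0 //; case/andP: (f01 x).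
Qed.

Lemma Zq_add_le1 : Zq q a f + (1 - expR (- a)) * expect q f <= 1.
Proof.
have e_le1 : expR (- a) <= 1 by rewrite expR_le1 oppr_le0.
have e01 : 0 <= 1 - expR (- a) <= 1 by rewrite subr_ge0 e_le1 gerBl expR_ge0.
have exp01 x : 0 <= expR (- (a * f x)) <= 1.
  by rewrite expR_ge0 expR_le1 oppr_le0 mulr_ge0 //; case/andP: (f01 x).
have scaled01 x : 0 <= (1 - expR (- a)) * f x <= 1.
  case/andP: (f01 x) => f0 f1; case/andP: e01 => e0 e1.
  by rewrite mulr_ge0 // mulr_ile1.
rewrite -expectZ -?expectD //; last by case/andP: e01.
rewrite -[leRHS](expect_cst _ ler01); apply: le_expect => // x /=.
  have chord := expRNM_le_chord a (f x) (f01 x).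
  by rewrite addr_ge0 /=; [lra | case/andP: (exp01 x) | case/andP: (scaled01 x)].
Qed.

End expectation.

Lemma neglogE_tilt (R : realType) (p b Z : R) : 0 < Z ->
  neglogE (p * expR (- b) / Z) = (neglogE p + (b + ln Z)%:E)%E.
Proof.
move=> Z0; rewrite /neglogE pmulr_lgt0 ?invr_gt0 // pmulr_lgt0 ?expR_gt0 //.
case: ifP => // p0; congr EFin.
rewrite ln_div ?lnM ?expRK ?posrE ?mulr_gt0 ?expR_gt0 //; lra.
Qed.

Lemma log_loss_tilt (R : realType) (X : countType) (q : X -> R) (n : nat)
    (S : 'I_n -> X) (a : R) (f : X -> R) :
  (0 < n)%N -> 0 < Zq q a f ->
  log_loss (tilt q a f) S =
    (log_loss q S + (a * emp_expect S f + ln (Zq q a f))%:E)%E.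
Proof.
move=> n0 Z0; rewrite /log_loss /tilt.
under eq_bigr do rewrite neglogE_tilt //.
rewrite big_split /= sumEFin muleDr ?fin_num_adde_defl // -EFinM; congr (_ + _%:E)%E.
rewrite /emp_expect big_split /= -mulr_sumr sumr_const card_ord -mulr_natr.
by field; rewrite pnatr_eq0 -lt0n.
Qed.

Lemma log_loss_increment_le (R : realType) (a E h Z : R) :
  0 <= a -> 0 <= E <= 1 -> h <= E - a -> 0 < Z ->
  Z + (1 - expR (- a)) * E <= 1 -> a * h + ln Z <= - (a ^+ 2 / 2).
Proof.
move=> a0 /andP[E0 E1] hE Z0 ZE.
have lnZ : ln Z <= Z - 1.
  by have := @le_ln1Dx R (Z - 1); rewrite subrKC; apply; lra.
have taylor := expRN_le1BxDhalfsqr a a0.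
have chord_ge0 : 0 <= a - 1 + expR (- a) by have := expR_ge1Dx (- a); lra.
have ahE : a * h <= a * (E - a) by rewrite ler_wpM2l.
have Echord : E * (a - 1 + expR (- a)) <= a - 1 + expR (- a) by rewrite ler_piMl.
rewrite expr2 in taylor *; lra.
Qed.

Theorem lemma1 (R : realType) (X : countType) (q : X -> R) (n : nat)
  (S : 'I_n -> X) (a : R) (f : X -> R) :
  is_distr q -> (0 < n)%N -> 0 <= a ->
  (forall x, 0 <= f x <= 1) ->
  a <= train_adv q S f ->
  (log_loss (tilt q a f) S <= log_loss q S - (a ^+ 2 / 2)%:E)%E.
Proof.
move=> q_distr n0 a0 f01 adv.
have Z_gt0 : 0 < Zq q a f.
  exact: lt_le_trans (expR_gt0 _) (expRN_le_Zq q_distr a0 f01).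
rewrite log_loss_tilt // -EFinN leeD // lee_fin.
apply: (@log_loss_increment_le _ a (expect q f)) => //.
- by rewrite expect_ge0 ?expect_le1 // => x; case/andP: (f01 x).
- by move: adv; rewrite /train_adv; lra.
- exact: Zq_add_le1.
Qed.
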